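(* Let $F,H$ be graphs, $t$ a positive integer, and $\mathcal{H}$ a Berge-$F$-free $r$-uniform $n$-vertex hypergraph with shadow graph $G$. Then at most $(t-1)\hat{x}_r(n,H,\text{Berge-}F)$ hyperedges of $\mathcal{H}$ contain (the vertex set of) a $t$-light copy of $H$ in $G$.
   Context: A hypergraph $\mathcal{H}$ is a Berge copy of a graph $G$ if $V(G)\subseteq V(\mathcal{H})$ and there is a bijection $f:E(G)\to E(\mathcal{H})$ with $e\subseteq f(e)$ for all $e$; Berge-$F$-free means containing no Berge copy of $F$. The shadow graph of $\mathcal{H}$ is the graph on $V(\mathcal{H})$ where $uv$ is an edge iff some hyperedge contains $u$ and $v$. An edge $uv$ of the shadow graph is $t$-heavy if at least $t$ hyperedges contain both $u,v$, and $t$-light otherwise; a subgraph is $t$-light if all its edges are $t$-light. For graphs $H,G$, $C(H,G)$ is the minimum size of a set of edges of $G$ such that every copy of $H$ in $G$ contains at least one of them. $\hat{x}_r(n,H,\text{Berge-}F)$ is the maximum of $C(H,G)$ over shadow graphs $G$ of Berge-$F$-free $r$-uniform $n$-vertex hypergraphs. *)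

From mathcomp Require Import all_boot.
Set Implicit Arguments. Unset Strict Implicit. Unset Printing Implicit Defensive.

Definition is_graph (V : finType) (E : {set {set V}}) : bool :=
  [forall e in E, #|e| == 2].

Definition uniform (n r : nat) (HE : {set {set 'I_n}}) : bool :=
  [forall h in HE, #|h| == r].

Definition berge_copy (VF : finType) (EF : {set {set VF}}) (n : nat)
  (HE : {set {set 'I_n}}) : bool :=
  [exists phi : {ffun VF -> 'I_n},
     injectiveb phi &&
     [exists f : {ffun {set VF} -> {set 'I_n}},
        [forall e1 in EF, forall e2 in EF, (f e1 == f e2) ==> (e1 == e2)] &&
        [forall e in EF, (f e \in HE) && (phi @: e \subset f e)]]].

Definition berge_free (VF : finType) (EF : {set {set VF}}) (n : nat)
  (HE : {set {set 'I_n}}) : bool := ~~ berge_copy EF HE.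

Definition shadow (n : nat) (HE : {set {set 'I_n}}) : {set {set 'I_n}} :=
  [set e : {set 'I_n} | (#|e| == 2) && [exists h in HE, e \subset h]].

Definition mult (n : nat) (HE : {set {set 'I_n}}) (e : {set 'I_n}) : nat :=
  #|[set h in HE | e \subset h]|.

(* phi : V(H) -> 'I_n is an embedding of H into the graph G (a copy of H in G,
   namely the subgraph with vertex set phi(V(H)) and edges phi(e), e in E(H)). *)
Definition embedding (VH : finType) (EH : {set {set VH}}) (n : nat)
  (G : {set {set 'I_n}}) (phi : {ffun VH -> 'I_n}) : bool :=
  injectiveb phi && [forall e in EH, phi @: e \in G].

Definition hits (VH : finType) (EH : {set {set VH}}) (n : nat)
  (G S : {set {set 'I_n}}) : bool :=
  [forall phi : {ffun VH -> 'I_n},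
     embedding EH G phi ==> [exists e in EH, phi @: e \in S]].

(* C(H,G): minimum size of a set of edges of G meeting every copy of H in G.
   (The default #|G| is attained by S = G whenever H has an edge.) *)
Definition C_HG (VH : finType) (EH : {set {set VH}}) (n : nat)
  (G : {set {set 'I_n}}) : nat :=
  \big[minn/#|G|]_(S : {set {set 'I_n}} | (S \subset G) && hits EH G S) #|S|.

Definition xhat (r n : nat) (VH : finType) (EH : {set {set VH}})
  (VF : finType) (EF : {set {set VF}}) : nat :=
  \max_(HE : {set {set 'I_n}} | uniform r HE && berge_free EF HE)
     C_HG EH (shadow HE).

Definition contains_light_copy (VH : finType) (EH : {set {set VH}}) (t n : nat)
  (HE : {set {set 'I_n}}) (h : {set 'I_n}) : bool :=
  [exists phi : {ffun VH -> 'I_n},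
     [&& embedding EH (shadow HE) phi,
         [forall e in EH, mult HE (phi @: e) < t] &
         (phi @: [set: VH] \subset h)]].

From mathcomp Require Import all_boot.

(* Fix a minimum-size set S of edges of the shadow meeting every copy of H.
   A hyperedge containing a t-light copy of H contains an edge of S lying in
   that copy, and this edge is t-light, i.e. lies in at most t - 1 hyperedges.
   Hence these hyperedges number at most (t - 1) |S| = (t - 1) C(H, G), and
   C(H, G) <= \hat{x}_r(n, H, Berge-F) because the hypergraph is one of the
   competitors in that maximum. *)

Lemma leq_card_bigcup {I T : finType} (P : pred I) (F : I -> {set T}) :
  #|\bigcup_(i | P i) F i| <= \sum_(i | P i) #|F i|.
Proof.
apply: (big_ind2 (fun (X : {set T}) m => #|X| <= m)) => //; first by rewrite cards0.
by move=> X1 m1 X2 m2 le1 le2; exact: leq_trans (leq_card_setU _ _) (leq_add le1 le2).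
Qed.

Section LightCopies.

Context {VH : finType} {EH : {set {set VH}}} (t : nat).
Context {n : nat} {HE : {set {set 'I_n}}}.

Lemma light_copy_hyperedges_sub_bigcup {S : {set {set 'I_n}}} :
  hits EH (shadow HE) S ->
  [set h in HE | contains_light_copy EH t HE h] \subset
    \bigcup_(s in S | mult HE s < t) [set h in HE | s \subset h].
Proof.
move=> /forallP hitS; apply/subsetP => h.
rewrite inE => /andP [hHE /existsP [phi /and3P [emb /forallP light imh]]].
have /existsP [e /andP [eEH eS]] := implyP (hitS phi) emb.
apply/bigcupP; exists (phi @: e); first by rewrite eS (implyP (light e) eEH).
by rewrite inE hHE (subset_trans _ imh) // imsetS ?subsetT.
Qed.

Lemma card_light_copy_hyperedges_le {S : {set {set 'I_n}}} :
  hits EH (shadow HE) S ->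
  #|[set h in HE | contains_light_copy EH t HE h]| <= (t - 1) * #|S|.
Proof.
move=> hitS; rewrite mulnC -sum_nat_const.
apply: leq_trans (subset_leq_card (light_copy_hyperedges_sub_bigcup hitS)) _.
apply: (leq_trans (leq_card_bigcup _ _)).
rewrite [X in _ <= X](bigID (fun s => mult HE s < t)) /=.
apply: leq_trans (leq_addr _ _); apply: leq_sum => s /andP [_ light].
by rewrite leq_subRL ?(leq_ltn_trans _ light) // add1n.
Qed.

End LightCopies.

Lemma hits_self {VH : finType} {EH : {set {set VH}}} {n : nat}
  (G : {set {set 'I_n}}) :
  EH != set0 -> hits EH G G.
Proof.
case/set0Pn => e eEH; apply/forallP => phi; apply/implyP => /andP [_ /forallP embG].
by apply/existsP; exists e; rewrite eEH (implyP (embG e) eEH).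
Qed.

Lemma C_HG_attained {VH : finType} {EH : {set {set VH}}} {n : nat}
  (G : {set {set 'I_n}}) :
  EH != set0 -> exists2 S, hits EH G S & #|S| = C_HG EH G.
Proof.
move=> EHn0; apply: (big_ind (fun m => exists2 S, hits EH G S & #|S| = m)).
- by exists G; first exact: hits_self.
- by move=> m1 m2 ex1 ex2; rewrite /minn; case: ifP.
- by move=> S /andP [_ hitS]; exists S.
Qed.

Lemma C_HG_shadow_le_xhat (VF VH : finType) (EF : {set {set VF}})
  (EH : {set {set VH}}) (r n : nat) (HE : {set {set 'I_n}}) :
  uniform r HE -> berge_free EF HE -> C_HG EH (shadow HE) <= xhat r n EH EF.
Proof.
move=> unif free.
by apply: (leq_bigmax_cond (F := fun HE => C_HG EH (shadow HE))); rewrite unif free.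
Qed.

Theorem proposition11 (VF VH : finType) (EF : {set {set VF}})
  (EH : {set {set VH}}) (t r n : nat) (HE : {set {set 'I_n}}) :
  is_graph EF -> is_graph EH -> EH != set0 -> 0 < t ->
  uniform r HE -> berge_free EF HE ->
  #|[set h in HE | contains_light_copy EH t HE h]|
    <= (t - 1) * xhat r n EH EF.
Proof.
move=> _ _ EHn0 _ unif free.
have [S hitS cardS] := C_HG_attained (shadow HE) EHn0.
apply: leq_trans (card_light_copy_hyperedges_le t hitS) _.
by rewrite leq_mul2l cardS C_HG_shadow_le_xhat ?orbT.
Qed.
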